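(* Let $d\ge 2$ and let $\triangle=\mathrm{conv}(v_0,\dots,v_d)\subset B_2^d$ be a simplex that maximizes the mean width $w(\cdot)$ over all simplices contained in $B_2^d$. Then: (a) $B_2^d$ is the smallest ball containing $\triangle$; (b) $v_i\in\mathbb{S}^{d-1}$ for all $0\le i\le d$, i.e. $\mathbb{S}^{d-1}$ is the circumsphere of $\triangle$; (c) the closed hemispheres $\{u\in\mathbb{S}^{d-1}: u\cdot v_i\ge 0\}$, $0\le i\le d$, cover $\mathbb{S}^{d-1}$.
   Context: $B_2^d\subset\mathbb{R}^d$ is the closed Euclidean unit ball and $\mathbb{S}^{d-1}=\partial B_2^d$; $\mu$ is the uniform probability measure on $\mathbb{S}^{d-1}$. For a convex body $K\subset B_2^d$, its support function is $h_K(u)=\max_{x\in K}u\cdot x$ and its mean width is $w(K)=2\int_{\mathbb{S}^{d-1}}h_K(u)\,d\mu(u)$. *)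

From HB Require Import structures.
From mathcomp Require Import all_boot all_order all_algebra.
From mathcomp Require Import all_classical all_reals all_analysis.
Import Order.TTheory GRing.Theory Num.Theory.
Import numFieldNormedType.Exports.
Set Implicit Arguments.
Unset Strict Implicit.
Unset Printing Implicit Defensive.

Local Open Scope ring_scope.
Local Open Scope classical_set_scope.

Definition dotv (R : realType) (d : nat) (u x : 'rV[R]_d) : R :=
  \sum_(i < d) u 0 i * x 0 i.

Definition unit_ball (R : realType) (d : nat) : set 'rV[R]_d :=
  [set x | dotv x x <= 1].

Definition unit_sphere (R : realType) (d : nat) : set 'rV[R]_d :=
  [set x | dotv x x = 1].
Arguments unit_ball : clear implicits.
Arguments unit_sphere : clear implicits.

Definition closed_ball2 (R : realType) (d : nat) (c : 'rV[R]_d) (r : R)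
  : set 'rV[R]_d := [set x | dotv (x - c) (x - c) <= r ^+ 2].

Definition conv_hull (R : realType) (d n : nat) (v : 'I_n -> 'rV[R]_d)
  : set 'rV[R]_d :=
  [set x | exists l : 'I_n -> R,
     [/\ (forall i, 0 <= l i), \sum_(i < n) l i = 1
       & x = \sum_(i < n) l i *: v i]].

Definition affinely_independent (R : realType) (d n : nat)
  (v : 'I_n -> 'rV[R]_d) : Prop :=
  forall l : 'I_n -> R, \sum_(i < n) l i = 0 ->
    \sum_(i < n) l i *: v i = 0 -> forall i, l i = 0.

Definition support_fun (R : realType) (d : nat) (K : set 'rV[R]_d)
  (u : 'rV[R]_d) : R := sup [set dotv u x | x in K].

Definition borelR (R : realType) (d : nat) :=
  g_sigma_algebraType (@open 'rV[R]_d).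

(* mu is the uniform probability measure on S^{d-1}: the (unique)
   probability measure concentrated on the sphere that is invariant
   under all orthogonal transformations. *)
Definition uniform_sphere_measure (R : realType) (d : nat)
  (mu : {measure set (borelR R d) -> \bar R}) : Prop :=
  [/\ mu setT = 1%E,
      mu (~` (unit_sphere R d : set (borelR R d))) = 0%E
    & forall Q : 'M[R]_d, Q *m Q^T = 1%:M ->
        forall A : set (borelR R d), measurable A ->
          mu ((fun x : borelR R d => (x *m Q : borelR R d)) @^-1` A) = mu A].

Definition mean_width (R : realType) (d : nat)
  (mu : {measure set (borelR R d) -> \bar R}) (K : set 'rV[R]_d) : \bar R :=
  (2%:E * \int[mu]_(u in (unit_sphere R d : set (borelR R d)))
             (support_fun K u)%:E)%E.

(* The mean width of conv v is 2 ∫ h over the sphere, where h u = max_i u ⋅ v i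
   is the support function of the vertices; each claim follows by exhibiting a
   simplex of larger mean width if it fails.
   (b) If a vertex v k lies strictly inside the ball, moving it slightly away from
   another vertex keeps the simplex in the ball, never decreases h, and increases
   it by a fixed amount on a spherical cap around a direction exposing v k.  Caps
   have positive measure: by rotation invariance all caps of a given radius have
   the same measure, and finitely many of them cover the compact sphere.
   (a) If the simplex lies in a ball B(c, r) with r < 1, then (v - c) / s with
   r < s < 1 lies in the unit ball and has mean width w / s > w, because
   ∫ u ⋅ c = 0 by the symmetry u ↦ -u and w > 0.
   (c) If u ⋅ v i < 0 for all i, then by (b) every vertex lies in the ball of
   centre -t u and radius √(1 - t²) < 1, where -t = max_i u ⋅ v i,
   contradicting (a). *)

From HB Require Import structures.
From mathcomp Require Import all_boot all_order all_algebra.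
From mathcomp Require Import all_classical all_reals all_analysis.
From mathcomp Require Import ring lra.
Import Order.TTheory GRing.Theory Num.Theory.
Import numFieldNormedType.Exports.
Local Open Scope ring_scope.
Local Open Scope classical_set_scope.
Set Implicit Arguments.
Unset Strict Implicit.
Unset Printing Implicit Defensive.

Section InnerProduct.
Context {R : realType} {d : nat}.
Implicit Types (x y z : 'rV[R]_d) (a : R).

Lemma dotvC x y : dotv x y = dotv y x.
Proof. by apply: eq_bigr => i _; rewrite mulrC. Qed.

Lemma dotvDr x y z : dotv x (y + z) = dotv x y + dotv x z.
Proof. by rewrite /dotv -big_split; apply: eq_bigr => i _; rewrite mxE mulrDr. Qed.

Lemma dotvZr a x y : dotv x (a *: y) = a * dotv x y.
Proof. by rewrite /dotv mulr_sumr; apply: eq_bigr => i _; rewrite mxE mulrCA. Qed.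

Lemma dotvNr x y : dotv x (- y) = - dotv x y.
Proof. by rewrite -scaleN1r dotvZr mulN1r. Qed.

Lemma dotvBr x y z : dotv x (y - z) = dotv x y - dotv x z.
Proof. by rewrite dotvDr dotvNr. Qed.

Lemma dotv0r x : dotv x 0 = 0.
Proof. by rewrite -(scale0r 0) dotvZr mul0r. Qed.

Lemma dotvDl x y z : dotv (y + z) x = dotv y x + dotv z x.
Proof. by rewrite !(dotvC _ x) dotvDr. Qed.

Lemma dotvZl a x y : dotv (a *: y) x = a * dotv y x.
Proof. by rewrite !(dotvC _ x) dotvZr. Qed.

Lemma dotvNl x y : dotv (- y) x = - dotv y x.
Proof. by rewrite !(dotvC _ x) dotvNr. Qed.

Lemma dotvBl x y z : dotv (y - z) x = dotv y x - dotv z x.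
Proof. by rewrite !(dotvC _ x) dotvBr. Qed.

Lemma dotv0l x : dotv 0 x = 0.
Proof. by rewrite dotvC dotv0r. Qed.

Lemma dotv_sumr n x (l : 'I_n -> R) (w : 'I_n -> 'rV[R]_d) :
  dotv x (\sum_(i < n) l i *: w i) = \sum_(i < n) l i * dotv x (w i).
Proof.
elim/big_rec2: _ => [|i y1 y2 _ <-]; first by rewrite dotv0r.
by rewrite dotvDr dotvZr.
Qed.

Lemma dotvv_ge0 x : 0 <= dotv x x.
Proof. by apply: sumr_ge0 => i _; rewrite -expr2 sqr_ge0. Qed.

Lemma sqr_coord_le_dotvv x i : x 0 i ^+ 2 <= dotv x x.
Proof.
rewrite /dotv (bigD1 i) //= -expr2 lerDl.
by apply: sumr_ge0 => j _; rewrite -expr2 sqr_ge0.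
Qed.

Lemma dotvv_eq0 x : (dotv x x == 0) = (x == 0).
Proof.
apply/eqP/eqP => [x0|->]; last exact: dotv0r.
apply/rowP => i; apply/eqP; rewrite mxE -sqrf_eq0 eq_le sqr_ge0 andbT.
by rewrite -x0 sqr_coord_le_dotvv.
Qed.

Lemma dotv_mulmx x y : dotv x y = (x *m y^T) 0 0.
Proof. by rewrite mxE; apply: eq_bigr => i _; rewrite mxE. Qed.

Lemma scalar_mx_dotv x y : (dotv x y)%:M = x *m y^T.
Proof.
by apply/matrixP => i j; rewrite (ord1 i) (ord1 j) dotv_mulmx mxE eqxx mulr1n.
Qed.

Lemma dotv_orthogonal (Q : 'M[R]_d) x y : Q *m Q^T = 1%:M ->
  dotv (x *m Q) (y *m Q) = dotv x y.
Proof.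
by move=> QQT; rewrite !dotv_mulmx trmx_mul mulmxA -(mulmxA x) QQT mulmx1.
Qed.

Lemma dotv_AMGM a x y : 2 * a * dotv x y <= a ^+ 2 * dotv x x + dotv y y.
Proof.
have := dotvv_ge0 (a *: x - y).
by rewrite dotvBl !dotvBr !dotvZl !dotvZr (dotvC y x) -subr_ge0; lra.
Qed.

Lemma normr_dotv_le x y a b : 0 < a -> 0 < b ->
  dotv x x <= a ^+ 2 -> dotv y y <= b ^+ 2 -> `|dotv x y| <= a * b.
Proof.
move=> a0 b0 hx hy; set t := b / a.
have ta : t * a = b by rewrite /t mulfVK ?gt_eqF.
have t0 : 0 < t by rewrite divr_gt0.
have tx : t ^+ 2 * dotv x x <= b ^+ 2.
  by apply: le_trans (ler_wpM2l (sqr_ge0 t) hx) _; rewrite -exprMn ta.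
have := dotv_AMGM t x y; have := dotv_AMGM (- t) x y.
rewrite sqrrN ler_norml; nra.
Qed.

Lemma dotvv_subr_le x y : dotv x x <= 1 -> dotv y y <= 1 ->
  dotv (x - y) (x - y) <= 2 ^+ 2.
Proof.
have := dotv_AMGM (-1) x y.
by rewrite dotvBl !dotvBr (dotvC y x); nra.
Qed.

End InnerProduct.

Section ConvexHull.
Context {R : realType} {d : nat}.
Local Notation V := 'rV[R]_d.

Definition vertex_support n (w : 'I_n.+1 -> V) (u : V) : R :=
  \big[Order.max/dotv u (w ord0)]_(i < n.+1) dotv u (w i).

Lemma vertex_support_ge n (w : 'I_n.+1 -> V) u i :
  dotv u (w i) <= vertex_support w u.
Proof.
rewrite /vertex_support; have : i \in index_enum 'I_n.+1 by rewrite mem_index_enum.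
elim: (index_enum _) => [//|j s IH]; rewrite inE big_cons.
by case/orP => [/eqP ->|/IH h]; rewrite le_max ?lexx ?h ?orbT.
Qed.

Lemma vertex_support_attained n (w : 'I_n.+1 -> V) u :
  exists i, vertex_support w u = dotv u (w i).
Proof.
rewrite /vertex_support; elim/big_rec: _ => [|i x _ [j ->]]; first by exists ord0.
by case: (leP (dotv u (w i)) (dotv u (w j))); [exists j | exists i].
Qed.

Lemma vertex_support_affine n (w : 'I_n.+1 -> V) s c u : 0 <= s ->
  vertex_support (fun i => s *: (w i - c)) u = s * (vertex_support w u - dotv u c).
Proof.
move=> s0; apply/le_anti/andP; split.
  have [i ->] := vertex_support_attained (fun i => s *: (w i - c)) u.
  by rewrite dotvZr dotvBr ler_wpM2l // lerB // vertex_support_ge.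
have [i ->] := vertex_support_attained w u.
by have := vertex_support_ge (fun i => s *: (w i - c)) u i; rewrite dotvZr dotvBr.
Qed.

Definition stretch n (w : 'I_n -> V) (j k : 'I_n) (t : R) : 'I_n -> V :=
  fun i => if i == k then w k + t *: (w k - w j) else w i.

Lemma vertex_support_stretch_max n (w : 'I_n.+1 -> V) j k t u :
  (forall i, dotv u (w i) <= dotv u (w k)) ->
  vertex_support w u + t * (dotv u (w k) - dotv u (w j))
  <= vertex_support (stretch w j k t) u.
Proof.
move=> kmax; have [i ->] := vertex_support_attained w u.
have := vertex_support_ge (stretch w j k t) u k; rewrite /stretch eqxx dotvDr dotvZr dotvBr.
by have := kmax i; lra.
Qed.

Lemma vertex_support_stretch n (w : 'I_n.+1 -> V) j k t u : j != k -> 0 <= t ->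
  vertex_support w u <= vertex_support (stretch w j k t) u.
Proof.
move=> jk t0; have [i wi] := vertex_support_attained w u.
have [ik|/negbTE ik] := eqVneq i k.
  have kmax i' : dotv u (w i') <= dotv u (w k) by rewrite -ik -wi vertex_support_ge.
  apply: le_trans (vertex_support_stretch_max j t kmax).
  by rewrite lerDl mulr_ge0 // subr_ge0.
by have := vertex_support_ge (stretch w j k t) u i; rewrite wi /stretch ik.
Qed.

Lemma stretch_in_unit_ball x y t : 0 <= t -> dotv x x + 8 * t <= 1 -> dotv y y <= 1 ->
  unit_ball R d (x + t *: (x - y)).
Proof.
move=> t0 xt y1; have := dotv_AMGM 1 x y; have := dotv_AMGM (-1) x y.
have := dotvv_ge0 x; rewrite /unit_ball /= !dotvDl !dotvDr !dotvZl !dotvZr !dotvBl !dotvBr.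
rewrite (dotvC y x); nra.
Qed.

Lemma conv_hull_vertex n (w : 'I_n -> V) i : conv_hull w (w i).
Proof.
exists (fun j => if j == i then 1 else 0); split.
- by move=> j; case: ifP.
- by rewrite (bigD1 i) //= eqxx big1 ?addr0 // => j /negbTE ->.
- rewrite (bigD1 i) //= eqxx scale1r big1 ?addr0 // => j /negbTE ->.
  by rewrite scale0r.
Qed.

Lemma conv_hull_dotv_le n (w : 'I_n -> V) u x M :
  conv_hull w x -> (forall i, dotv u (w i) <= M) -> dotv u x <= M.
Proof.
case=> l [l0 l1 ->] hM; rewrite dotv_sumr.
apply: (@le_trans _ _ (\sum_(i < n) l i * M)); last by rewrite -mulr_suml l1 mul1r.
by apply: ler_sum => i _; exact: ler_wpM2l.
Qed.

Lemma support_fun_conv_hull n (w : 'I_n.+1 -> V) u :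
  support_fun (conv_hull w) u = vertex_support w u.
Proof.
have ub : ubound [set dotv u x | x in conv_hull w] (vertex_support w u).
  by move=> _ [x hx <-]; apply: conv_hull_dotv_le hx _ => i; exact: vertex_support_ge.
apply/le_anti/andP; split.
  by apply: ge_sup ub; exists (dotv u (w ord0)), (w ord0) => //; exact: conv_hull_vertex.
have [i ->] := vertex_support_attained w u.
apply: ub_le_sup; first by exists (vertex_support w u).
by exists (w i) => //; exact: conv_hull_vertex.
Qed.

Lemma dotvv_convex_comb_le n (l : 'I_n -> R) (y : 'I_n -> V) :
  (forall i, 0 <= l i) -> \sum_(i < n) l i = 1 ->
  dotv (\sum_(i < n) l i *: y i) (\sum_(i < n) l i *: y i)
  <= \sum_(i < n) l i * dotv (y i) (y i).
Proof.
move=> l0 l1; set m := \sum_(i < n) l i *: y i.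
have var_ge0 : 0 <= \sum_(i < n) l i * dotv (y i - m) (y i - m).
  by apply: sumr_ge0 => i _; apply: mulr_ge0 => //; exact: dotvv_ge0.
have expand : \sum_(i < n) l i * dotv (y i - m) (y i - m) =
   \sum_(i < n) l i * dotv (y i) (y i) - 2 * \sum_(i < n) l i * dotv m (y i)
   + (\sum_(i < n) l i) * dotv m m.
  rewrite mulr_sumr mulr_suml -sumrB -big_split /=; apply: eq_bigr => i _.
  by rewrite dotvBl !dotvBr (dotvC (y i) m); ring.
by move: var_ge0; rewrite expand -dotv_sumr l1 mul1r -/m; lra.
Qed.

Lemma conv_hull_sub_closed_ball2 n (w : 'I_n -> V) c r :
  (forall i, dotv (w i - c) (w i - c) <= r ^+ 2) ->
  conv_hull w `<=` closed_ball2 c r.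
Proof.
move=> hw x [l [l0 l1 ->]]; rewrite /closed_ball2 /=.
have -> : \sum_(i < n) l i *: w i - c = \sum_(i < n) l i *: (w i - c).
  under [RHS]eq_bigr do rewrite scalerBr.
  by rewrite sumrB -scaler_suml l1 scale1r.
apply: le_trans (dotvv_convex_comb_le _ l0 l1) _.
apply: (@le_trans _ _ (\sum_(i < n) l i * r ^+ 2)); last by rewrite -mulr_suml l1 mul1r.
by apply: ler_sum => i _; exact: ler_wpM2l.
Qed.

Lemma conv_hull_sub_unit_ball n (w : 'I_n -> V) :
  (forall i, dotv (w i) (w i) <= 1) -> conv_hull w `<=` unit_ball R d.
Proof.
move=> hw x /(@conv_hull_sub_closed_ball2 _ w 0 1); rewrite /closed_ball2 /= subr0 expr1n.
by apply=> i; rewrite subr0.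
Qed.

End ConvexHull.

Section AffineIndependence.
Context {R : realType} {d : nat}.
Local Notation V := 'rV[R]_d.

Lemma affinely_independent_row_free (v : 'I_d.+1 -> V) (k : 'I_d.+1) :
  affinely_independent v -> row_free (\matrix_(j < d) (v (lift k j) - v k)).
Proof.
move=> hv; apply: inj_row_free => l lM0.
pose L i := if unlift k i is Some j then l 0 j else - \sum_(j < d) l 0 j.
have Lk : L k = - \sum_(j < d) l 0 j by rewrite /L unlift_none.
have Llift j : L (lift k j) = l 0 j by rewrite /L liftK.
have L0 : \sum_(i < d.+1) L i = 0.
  by rewrite (bigD1_ord k) //= Lk (eq_bigr _ (fun j _ => Llift j)) addNr.
have Lv : \sum_(i < d.+1) L i *: v i = 0.
  rewrite (bigD1_ord k) //= Lk; under eq_bigr do rewrite Llift.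
  rewrite -[RHS]lM0 mulmx_sum_row; under [RHS]eq_bigr do rewrite rowK scalerBr.
  by rewrite sumrB -scaler_suml scaleNr addrC.
by apply/rowP => j; rewrite mxE -Llift (hv L L0 Lv).
Qed.

Lemma affinely_independent_exposed (v : 'I_d.+1 -> V) (k : 'I_d.+1) :
  affinely_independent v ->
  exists a : V, forall i, i != k -> dotv a (v i) + 1 = dotv a (v k).
Proof.
set M := \matrix_(j < d) (v (lift k j) - v k).
move=> /(affinely_independent_row_free k) /row_freeP [B MB1].
exists (B *m const_mx (-1))^T => i; case: (unliftP k i) => [j ->|->]; last by rewrite eqxx.
have : dotv (B *m const_mx (-1))^T (v (lift k j) - v k) = -1.
  rewrite -(rowK (fun j => v (lift k j) - v k) j) -/M dotvC dotv_mulmx trmxK.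
  by rewrite -row_mul mulmxA MB1 mul1mx !mxE.
by rewrite dotvBr; lra.
Qed.

Lemma affinely_independent_exposed_unit (v : 'I_d.+1 -> V) (k : 'I_d.+1) :
  (0 < d)%N -> affinely_independent v ->
  exists a g, [/\ unit_sphere R d a, 0 < g &
    forall i, i != k -> dotv a (v i) + g = dotv a (v k)].
Proof.
move=> d0 /(affinely_independent_exposed k) [a exposed].
have a0 : a != 0.
  apply: contra_neq (oner_neq0 R) => a0.
  by have := exposed _ (negbT (lift_eqF k (Ordinal d0))); rewrite a0 !dotv0l add0r.
have aa0 : 0 < dotv a a by rewrite lt_neqAle dotvv_ge0 eq_sym dotvv_eq0 a0.
set s := Num.sqrt (dotv a a); have s0 : 0 < s by rewrite sqrtr_gt0.
exists (s^-1 *: a), s^-1; split.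
- rewrite /unit_sphere /= dotvZl dotvZr mulrA -expr2 exprVn sqr_sqrtr ?ltW //.
  by rewrite mulVf // gt_eqF.
- by rewrite invr_gt0.
- by move=> i /exposed ek; rewrite !dotvZl -ek mulrDr mulr1.
Qed.

Lemma affinely_independent_affine n (v : 'I_n -> V) s c : s != 0 ->
  affinely_independent v -> affinely_independent (fun i => s *: (v i - c)).
Proof.
move=> s0 hv l l0 hl; apply: hv => //; apply: (scalerI s0).
rewrite scaler0 -[RHS]hl.
under [RHS]eq_bigr do rewrite !scalerBr !scalerA (mulrC (l _)).
rewrite sumrB -scaler_suml -mulr_sumr l0 mulr0 scale0r subr0 scaler_sumr.
by apply: eq_bigr => i _; rewrite scalerA.
Qed.

Lemma affinely_independent_stretch n (v : 'I_n -> V) (j k : 'I_n) t :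
  j != k -> 1 + t != 0 -> affinely_independent v ->
  affinely_independent (stretch v j k t).
Proof.
rewrite /stretch => jk t1 hv l l0 hl; set c := l k * t.
(* the coefficients of the same combination, written on the family v *)
pose l' i := l i + (if i == k then c else 0) - (if i == j then c else 0).
have l'0 : \sum_(i < n) l' i = 0.
  by rewrite sumrB big_split /= -!big_mkcond /= !big_pred1_eq l0 add0r subrr.
have l'v : \sum_(i < n) l' i *: v i = 0.
  rewrite -[RHS]hl.
  under eq_bigr do rewrite scalerBl scalerDl !(fun_if (fun a => a *: v _)) !scale0r.
  rewrite sumrB big_split /= -!big_mkcond /= !big_pred1_eq.
  rewrite [RHS](eq_bigr (fun i => l i *: v i + (if i == k then c *: (v k - v j) else 0))).
    by rewrite big_split /= -big_mkcond big_pred1_eq scalerBr addrA.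
  by move=> i _; case: eqP => [->|]; rewrite ?addr0 // scalerDr scalerA.
have : l k * (1 + t) = 0.
  by have := hv l' l'0 l'v k; rewrite /l' eqxx eq_sym (negbTE jk) subr0 mulrDr mulr1.
move/eqP; rewrite mulf_eq0 (negbTE t1) orbF => /eqP lk0.
by move=> i; have := hv l' l'0 l'v i; rewrite /l' /c lk0 mul0r !if_same addr0 subr0.
Qed.

End AffineIndependence.

Section SphereTopology.
Context {R : realType} {d : nat}.
Local Notation V := 'rV[R]_d.
Local Notation borel := (borelR R d).

Lemma continuous_sum (T : topologicalType) n (F : 'I_n -> T -> R) :
  (forall i, continuous (F i)) -> continuous (fun x => \sum_(i < n) F i x).
Proof.
move=> cF; elim: (index_enum _) => [|i s cs] x.
  by under eq_fun do rewrite big_nil; exact: cst_continuous.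
by under eq_fun do rewrite big_cons; exact: continuousD (cF i x) (cs x).
Qed.

Lemma continuous_dotv (T : topologicalType) (f g : T -> V) :
  continuous f -> continuous g -> continuous (fun x => dotv (f x) (g x)).
Proof.
have coord (h : T -> V) i : continuous h -> continuous (fun x => h x 0 i).
  by move=> ch x; apply: (@continuous_comp _ _ _ h (fun M => M 0 i)) (ch x) _;
    exact: coord_continuous.
by move=> cf cg; apply: continuous_sum => i x; apply: continuousM; apply: coord.
Qed.

Lemma continuous_dotvl (y : V) : continuous (fun u : V => dotv u y).
Proof.
by apply: (@continuous_dotv _ id (fun=> y)) => x; [exact: cvg_id | exact: cst_continuous].
Qed.

Lemma continuous_vertex_support n (w : 'I_n.+1 -> V) : continuous (vertex_support w).
Proof.
rewrite /vertex_support; elim: (index_enum _) => [|i s IH].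
  by under eq_fun do rewrite big_nil; exact: continuous_dotvl.
have -> : (fun u => \big[Order.max/dotv u (w ord0)]_(j <- i :: s) dotv u (w j)) =
    (fun u => dotv u (w i)) \max
    (fun u => \big[Order.max/dotv u (w ord0)]_(j <- s) dotv u (w j)).
  by apply: funext => u; rewrite big_cons.
by apply: max_fun_continuous => //; exact: continuous_dotvl.
Qed.

Lemma open_measurable_borelR (A : set V) : open A -> measurable (A : set borel).
Proof. exact: sub_sigma_algebra. Qed.

Lemma closed_measurable_borelR (A : set V) : closed A -> measurable (A : set borel).
Proof.
move=> cA; rewrite -(setCK A); apply: measurableC.
by apply: open_measurable_borelR; exact: closed_openC.
Qed.

Lemma continuous_measurable_borelR (f : V -> R) : continuous f ->
  measurable_fun setT (f : borel -> R).
Proof.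
move=> cf; apply: (measurability _ (measurable_realfun.RGenOpens.measurableE R)).
move=> _ [_ [a [b ->]] <-]; apply: measurableI => //.
by apply: open_measurable_borelR; move/continuousP: cf; apply; exact: interval_open.
Qed.

Lemma continuous_measurable_borelR_endo (f : V -> V) : continuous f ->
  measurable_fun setT (f : borel -> borel).
Proof.
move=> cf; apply: (@measurability _ _ borel borel setT _ open) => //.
move=> _ [A oA <-]; apply: measurableI => //; apply: open_measurable_borelR.
by move/continuousP: cf; apply.
Qed.

Lemma unit_sphere_closed : closed (unit_sphere R d).
Proof.
change (closed ((fun x : V => dotv x x) @^-1` [set 1])).
apply: preimage_closed; last exact: closed_eq.
by move=> x _; apply: (@continuous_dotv _ id id) => y; exact: cvg_id.
Qed.

Lemma unit_sphere_compact : compact (unit_sphere R d).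
Proof.
have cube := rV_compact (fun _ : 'I_d => @segment_compact R (-1) 1).
apply: (subclosed_compact unit_sphere_closed cube).
move=> x /= x1 i; have := sqr_coord_le_dotvv x i; rewrite x1 => h.
by rewrite in_itv /=; apply/andP; split; nra.
Qed.

Lemma unit_sphere_measurable : measurable (unit_sphere R d : set borel).
Proof. exact: closed_measurable_borelR unit_sphere_closed. Qed.

Definition cap (a : V) (r : R) : set V :=
  [set x | unit_sphere R d x /\ dotv (x - a) (x - a) < r ^+ 2].

Lemma cap_dotv_ge a r b u y : 0 < r -> 0 < b -> cap a r u -> dotv y y <= b ^+ 2 ->
  dotv a y - r * b <= dotv u y.
Proof.
move=> r0 b0 [_ ua] yb; have := normr_dotv_le r0 b0 (ltW ua) yb.
by rewrite dotvBl ler_norml => /andP[+ _]; lra.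
Qed.

Lemma cap_measurable a r : measurable (cap a r : set borel).
Proof.
apply: measurableI; first exact: unit_sphere_measurable.
apply: open_measurable_borelR.
change (open ((fun x : V => dotv (x - a) (x - a)) @^-1` [set y | y < r ^+ 2])).
apply: open_comp.
  have cBa : continuous (fun x : V => x - a).
    by move=> x; apply: continuousB; [exact: cvg_id | exact: cst_continuous].
  by move=> x _; exact: (@continuous_dotv V (fun x => x - a) (fun x => x - a) cBa cBa x).
exact: open_lt.
Qed.

Lemma orthogonal_transitive_sphere (a b : V) :
  unit_sphere R d a -> unit_sphere R d b ->
  exists Q : 'M[R]_d, Q *m Q^T = 1%:M /\ b *m Q = a.
Proof.
move=> a1 b1; have [->|ba] := eqVneq b a.
  by exists 1%:M; rewrite trmx1 !mulmx1.
pose w := b - a; pose W := w^T *m w; pose c := 2 / dotv w w.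
have ww : dotv w w = 2 * (1 - dotv a b).
  by rewrite /w dotvBl !dotvBr a1 b1 (dotvC b a); ring.
have ww0 : dotv w w != 0 by rewrite dotvv_eq0 subr_eq0.
have WW : W *m W = dotv w w *: W.
  by rewrite mulmxA -(mulmxA w^T) -scalar_mx_dotv mul_mx_scalar scalemxAl.
(* the reflection through the hyperplane orthogonal to b - a *)
exists (1%:M - c *: W); split.
  have WT : W^T = W by rewrite trmx_mul trmxK.
  have -> : (1%:M - c *: W)^T = 1%:M - c *: W by rewrite raddfB /= trmx1 linearZ /= WT.
  rewrite mulmxBl !mulmxBr mul1mx mulmx1.
  rewrite -!scalemxAl -!scalemxAr WW mul1mx !scalerA -!scalerBl -addrA -opprD -scalerDl.
  suff -> : c + (c - c * c * dotv w w) = 0 by rewrite scale0r subr0.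
  by rewrite /c; field.
rewrite mulmxBr mulmx1 -scalemxAr mulmxA -scalar_mx_dotv mul_scalar_mx scalerA.
have -> : c * dotv b w = 1.
  have : 1 - dotv a b != 0 by move: ww0; rewrite ww mulf_eq0 negb_or => /andP[].
  by rewrite /c ww /w dotvBr b1 (dotvC b a) => ?; field.
by rewrite scale1r /w opprB addrC addrNK.
Qed.

Lemma preimage_cap (Q : 'M[R]_d) (a b : V) r : Q *m Q^T = 1%:M -> b *m Q = a ->
  (fun x => x *m Q) @^-1` cap a r = cap b r.
Proof.
move=> QQT bQ; apply: funext => x /=; rewrite /cap /unit_sphere /=.
by rewrite -bQ -mulmxBl !dotv_orthogonal.
Qed.

Lemma unit_sphere_covered_by_caps r : 0 < r -> exists D : set V,
  [/\ finite_set D, D `<=` unit_sphere R d & unit_sphere R d `<=` \bigcup_(b in D) cap b r].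
Proof.
move=> r0; pose e := r / (d%:R + 1).
have e0 : 0 < e by rewrite divr_gt0 // ltr_wpDl.
have : unit_sphere R d `<=` cover (unit_sphere R d) (fun b => ball b e).
  by move=> x x1; exists x => //; exact: ballxx.
move: unit_sphere_compact; rewrite compact_cover => /(_ _ _ _ (fun b _ => ball_open b e)).
move=> /[apply] [[D' D'S]]; set D := (X in cover X _) => cover_D; exists D; split.
- exact: finite_fset.
- by move=> b Db; have := D'S b Db; rewrite inE.
move=> x x1; have [b Db xb] := cover_D x x1; exists b => //; split => //.
rewrite /dotv; have coord i : (x - b) 0 i * (x - b) 0 i <= e ^+ 2.
  move: xb => [_ /(_ 0 i)]; rewrite /ball /= !mxE => /ltr_normlP [h1 h2]; nra.
apply: (@le_lt_trans _ _ (\sum_(i < d) e ^+ 2)); first exact: ler_sum.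
rewrite sumr_const card_ord -mulr_natr /e expr_div_n mulrAC.
rewrite ltr_pdivrMr ?exprn_gt0 ?ltr_wpDl //.
have : 0 <= d%:R :> R := ler0n _ _; nra.
Qed.

End SphereTopology.

Section SphereIntegral.
Context {R : realType} {d : nat} (mu : {measure set (borelR R d) -> \bar R}).
Hypothesis mu_uniform : uniform_sphere_measure mu.
Local Notation V := 'rV[R]_d.
Local Notation S := (unit_sphere R d : set (borelR R d)).

Lemma measure_unit_sphere : mu S = 1%E.
Proof.
case: mu_uniform => muT muSC _.
have : mu setT = (mu S + mu (~` S))%E.
  rewrite -measureU ?setUv ?setICr //; first exact: unit_sphere_measurable.
  exact: measurableC unit_sphere_measurable.
by rewrite muT muSC adde0.
Qed.

Lemma measure_cap_gt0 a r : unit_sphere R d a -> 0 < r -> (0 < mu (cap a r))%E.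
Proof.
move=> a1 r0; rewrite lt0e measure_ge0 andbT; apply/eqP => mu_cap0.
have capE0 b : unit_sphere R d b -> mu (cap b r) = 0%E.
  move=> b1; have [Q [QQT bQ]] := orthogonal_transitive_sphere a1 b1.
  rewrite -(preimage_cap r QQT bQ).
  by case: mu_uniform => _ _ /(_ Q QQT (cap a r) (cap_measurable a r)) ->.
have [D [finD DS SD]] := @unit_sphere_covered_by_caps R d r r0.
have : (mu S <= \sum_(b \in D) mu (cap b r))%E.
  exact: content_sub_fsum finD (fun b _ => cap_measurable b r) unit_sphere_measurable SD.
by rewrite measure_unit_sphere fsbig1 ?lee_fin ?ler10 // => b /DS /capE0.
Qed.

Definition sphere_integrand (f : V -> R) : Prop :=
  measurable_fun setT (f : borelR R d -> R) /\
  exists M, forall u, unit_sphere R d u -> `|f u| <= M.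

(* [fine] gives the junk value 0 when the integral is infinite. *)
Definition sphere_int (f : V -> R) : R := fine (\int[mu]_(u in S) (f u)%:E).

Lemma sphere_integrand_integrable f : sphere_integrand f -> mu.-integrable S (EFin \o f).
Proof.
case=> mf [M fM]; apply: measurable_bounded_integrable.
- exact: unit_sphere_measurable.
- by rewrite measure_unit_sphere ltry.
- exact: measurable_funTS.
exists M; split; first exact: num_real.
by move=> N MN x /fM /le_lt_trans/(_ MN)/ltW.
Qed.

Lemma sphere_intE f : sphere_integrand f ->
  (\int[mu]_(u in S) (f u)%:E)%E = (sphere_int f)%:E.
Proof.
move=> /sphere_integrand_integrable fint; rewrite fineK //.
by apply: integrable_fin_num; [exact: unit_sphere_measurable | exact: fint].
Qed.

Lemma sphere_integrandD f g : sphere_integrand f -> sphere_integrand g ->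
  sphere_integrand (fun u => f u + g u).
Proof.
case=> mf [M fM] [mg [N gN]]; split; first exact: measurable_realfun.measurable_funD.
by exists (M + N) => u u1; apply: le_trans (ler_normD _ _) (lerD (fM u u1) (gN u u1)).
Qed.

Lemma sphere_integrandZ k f : sphere_integrand f -> sphere_integrand (fun u => k * f u).
Proof.
case=> mf [M fM]; split.
  by apply: measurable_realfun.measurable_funM => //; exact: measurable_cst.
by exists (`|k| * M) => u u1; rewrite normrM ler_pM // fM.
Qed.

Lemma sphere_integrandB f g : sphere_integrand f -> sphere_integrand g ->
  sphere_integrand (fun u => f u - g u).
Proof.
move=> hf /(sphere_integrandZ (-1)) hg; have := sphere_integrandD hf hg.
by congr sphere_integrand; apply: funext => u; rewrite mulN1r.
Qed.

Lemma sphere_integrand_continuous f : continuous f -> sphere_integrand f.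
Proof.
move=> cf; split; first exact: continuous_measurable_borelR.
have /compact_bounded [M [_ fM]] :=
  continuous_compact (continuous_subspaceT cf) unit_sphere_compact.
by exists (M + 1) => u u1; apply: (fM (M + 1)); [rewrite ltrDl | exists u].
Qed.

Lemma sphere_integrand_comp_opp f :
  sphere_integrand f -> sphere_integrand (fun u => f (- u)).
Proof.
case=> mf [M fM]; split.
  apply: measurableT_comp mf _.
  by apply: continuous_measurable_borelR_endo; exact: opp_continuous.
by exists M => u u1; apply: fM; rewrite /unit_sphere /= dotvNl dotvNr opprK.
Qed.

Lemma sphere_intD f g : sphere_integrand f -> sphere_integrand g ->
  sphere_int (fun u => f u + g u) = sphere_int f + sphere_int g.
Proof.
move=> hf hg; have fgS := sphere_integrandD hf hg; have mS := @unit_sphere_measurable R d.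
have fi := sphere_integrand_integrable hf; have gi := sphere_integrand_integrable hg.
by apply: EFin_inj; rewrite EFinD -!sphere_intE // -integralD_EFin.
Qed.

Lemma sphere_intZ k f : sphere_integrand f ->
  sphere_int (fun u => k * f u) = k * sphere_int f.
Proof.
move=> hf; have kfS := sphere_integrandZ k hf; have mS := @unit_sphere_measurable R d.
have fi := sphere_integrand_integrable hf.
by apply: EFin_inj; rewrite EFinM -!sphere_intE // -integralZl.
Qed.

Lemma sphere_intB f g : sphere_integrand f -> sphere_integrand g ->
  sphere_int (fun u => f u - g u) = sphere_int f - sphere_int g.
Proof.
move=> hf hg; rewrite -mulN1r -sphere_intZ // -sphere_intD //.
  by congr sphere_int; apply: funext => u; rewrite mulN1r.
exact: sphere_integrandZ.
Qed.

Lemma sphere_int_comp_opp f : sphere_integrand f ->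
  sphere_int (fun u => f (- u)) = sphere_int f.
Proof.
move=> hf; pose opp := (fun x : V => - x) : borelR R d -> borelR R d.
have mopp : measurable_fun setT opp.
  by apply: continuous_measurable_borelR_endo; exact: opp_continuous.
have oppS : opp @^-1` S = S.
  by apply: funext => x; rewrite /opp /unit_sphere /= dotvNl dotvNr opprK.
have mu_opp A : measurable A -> pushforward mu opp A = mu A.
  have N1 : (-1%:M : 'M[R]_d) *m (-1%:M)^T = 1%:M.
    by rewrite raddfN /= trmx1 mulmxN mulNmx mulmx1 opprK.
  have oppE : (fun x : borelR R d => (x *m (-1%:M) : borelR R d)) = opp.
    by apply: funext => x; rewrite /opp mulmxN mulmx1.
  by move=> mA; case: mu_uniform => _ _ /(_ _ N1 A mA); rewrite oppE.
congr fine; rewrite [RHS](eq_measure_integral (pushforward mu opp)); last first.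
  by move=> A mA _; exact: esym (mu_opp A mA).
rewrite (integral_pushforward (f := fun x => (f x)%:E) mopp) ?oppS //.
- by apply/measurable_realfun.measurable_EFinP; case: hf.
- by have h := sphere_integrand_integrable (sphere_integrand_comp_opp hf); exact h.
- exact: unit_sphere_measurable.
Qed.

Lemma sphere_int_dotv y : sphere_int (fun u => dotv u y) = 0.
Proof.
have dS := sphere_integrand_continuous (continuous_dotvl (y := y)).
have := sphere_int_comp_opp dS; under eq_fun do rewrite dotvNl -mulN1r.
by rewrite sphere_intZ //; lra.
Qed.

Lemma sphere_int_gt0 g a c r : sphere_integrand g ->
  (forall u, unit_sphere R d u -> 0 <= g u) -> unit_sphere R d a -> 0 < c -> 0 < r ->
  (forall u, cap a r u -> c <= g u) -> 0 < sphere_int g.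
Proof.
move=> gS g0 a1 c0 r0 gc; rewrite -lte_fin -sphere_intE //.
have mS := @unit_sphere_measurable R d; have mcap := cap_measurable a r.
apply: (@lt_le_trans _ _ (\int[mu]_(u in cap a r) (g u)%:E)%E); last first.
  apply: ge0_subset_integral => //; last by move=> u [].
  by apply/measurable_realfun.measurable_EFinP; apply: measurable_funTS; case: gS.
apply: (@lt_le_trans _ _ (\int[mu]_(u in cap a r) (cst c%:E) u)%E).
  by rewrite integral_cst // mule_gt0 ?lte_fin // measure_cap_gt0.
apply: ge0_le_integral => //.
- by move=> u _; rewrite lee_fin ltW.
- by apply/measurable_realfun.measurable_EFinP; apply: measurable_funTS; case: gS.
Qed.

End SphereIntegral.

Section SimplexMeanWidth.
Context {R : realType} {d : nat} (mu : {measure set (borelR R d) -> \bar R}).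
Hypothesis mu_uniform : uniform_sphere_measure mu.
Local Notation V := 'rV[R]_d.

Lemma sphere_integrand_vertex_support n (w : 'I_n.+1 -> V) :
  sphere_integrand (vertex_support w).
Proof. exact/sphere_integrand_continuous/continuous_vertex_support. Qed.

Lemma mean_width_conv_hull n (w : 'I_n.+1 -> V) :
  mean_width mu (conv_hull w) = (2 * sphere_int mu (vertex_support w))%:E.
Proof.
rewrite /mean_width; under eq_integral do rewrite support_fun_conv_hull.
by rewrite sphere_intE ?EFinM //; exact: sphere_integrand_vertex_support.
Qed.

(* h u + h (-u) is the width of the simplex in direction u: it is nonnegative,
   and at least g / 2 near a direction exposing a vertex with gap g. *)
Lemma sphere_int_vertex_support_gt0 (w : 'I_d.+1 -> V) : (0 < d)%N ->
  affinely_independent w -> (forall i, dotv (w i) (w i) <= 1) ->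
  0 < sphere_int mu (vertex_support w).
Proof.
move=> d0 hw w1; pose h := vertex_support w.
have [a [g [a1 g0 exposed]]] := affinely_independent_exposed_unit ord0 d0 hw.
set j := lift ord0 (Ordinal d0); have j0 : j != ord0 := negbT (lift_eqF _ _).
have hS := sphere_integrand_vertex_support w; have hNS := sphere_integrand_comp_opp hS.
suff : 0 < sphere_int mu (fun u => h u + h (- u)).
  by rewrite sphere_intD // sphere_int_comp_opp //; lra.
apply: (sphere_int_gt0 mu_uniform (sphere_integrandD hS hNS) _ a1
  (c := g / 2) (r := g / 4)).
- move=> u _; have := vertex_support_ge w u j.
  by have := vertex_support_ge w (- u) j; rewrite dotvNl /h; lra.
- by rewrite divr_gt0.
- by rewrite divr_gt0.
move=> u ucap; have := vertex_support_ge w u ord0.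
have := vertex_support_ge w (- u) j; rewrite dotvNl.
have g4 : 0 < g / 4 by rewrite divr_gt0.
have := cap_dotv_ge g4 (ltr0Sn R 1) ucap (dotvv_subr_le (w1 ord0) (w1 j)).
by rewrite !dotvBr -(exposed j j0) /h; lra.
Qed.

End SimplexMeanWidth.

Section MaximalSimplex.
Context {R : realType} {d : nat} (mu : {measure set (borelR R d) -> \bar R}).
Local Notation V := 'rV[R]_d.
Variable v : 'I_d.+1 -> V.
Hypothesis mu_uniform : uniform_sphere_measure mu.
Hypothesis d_gt0 : (0 < d)%N.
Hypothesis v_indep : affinely_independent v.
Hypothesis v_ball : forall i, dotv (v i) (v i) <= 1.
Hypothesis v_max : forall w : 'I_d.+1 -> V,
  affinely_independent w -> (forall i, dotv (w i) (w i) <= 1) ->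
  sphere_int mu (vertex_support w) <= sphere_int mu (vertex_support v).

Lemma maximal_vertex_on_sphere k : unit_sphere R d (v k).
Proof.
apply/eqP; rewrite eq_le v_ball /= leNgt; apply/negP => vk1.
have [a [g [a1 g0 exposed]]] := affinely_independent_exposed_unit k d_gt0 v_indep.
set j := lift k (Ordinal d_gt0); have jk : j != k := negbT (lift_eqF _ _).
set t := (1 - dotv (v k) (v k)) / 8; have t0 : 0 < t by rewrite divr_gt0 // subr_gt0.
pose w := stretch v j k t.
have w_indep : affinely_independent w.
  by apply: affinely_independent_stretch jk _ v_indep; rewrite gt_eqF // ltr_wpDr ?ltW.
have w_ball i : dotv (w i) (w i) <= 1.
  rewrite /w /stretch; case: eqP => _; last exact: v_ball.
  by apply: stretch_in_unit_ball (ltW t0) _ (v_ball j); rewrite /t; lra.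
have g4 : 0 < g / 4 by rewrite divr_gt0.
have vS := sphere_integrand_vertex_support v; have wS := sphere_integrand_vertex_support w.
have gain : 0 < sphere_int mu (fun u => vertex_support w u - vertex_support v u).
  apply: (sphere_int_gt0 mu_uniform (sphere_integrandB wS vS) _ a1
    (c := t * (g / 2)) (r := g / 4)) => //.
  - by move=> u _; rewrite subr_ge0 vertex_support_stretch // ltW.
  - by rewrite mulr_gt0 // divr_gt0.
  move=> u ucap.
  have near i : dotv a (v k - v i) - g / 4 * 2 <= dotv u (v k - v i).
    exact: cap_dotv_ge g4 (ltr0Sn R 1) ucap (dotvv_subr_le (v_ball k) (v_ball i)).
  have kmax i : dotv u (v i) <= dotv u (v k).
    have [-> //|ik] := eqVneq i k.
    by have := near i; rewrite !dotvBr -(exposed i ik); lra.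
  have := vertex_support_stretch_max j t kmax; have := near j.
  by rewrite !dotvBr -(exposed j jk) -/w; nra.
by have := v_max w_indep w_ball; rewrite sphere_intB // in gain; lra.
Qed.

Lemma maximal_circumradius c r : 0 <= r -> conv_hull v `<=` closed_ball2 c r -> 1 <= r.
Proof.
move=> r0 vcr; rewrite leNgt; apply/negP => r1.
set s := (r + 1) / 2; have s0 : 0 < s by rewrite /s; lra.
pose w i := s^-1 *: (v i - c).
have w_indep : affinely_independent w.
  by apply: affinely_independent_affine v_indep; rewrite invr_neq0 // gt_eqF.
have w_ball i : dotv (w i) (w i) <= 1.
  have := vcr _ (conv_hull_vertex v i); rewrite /closed_ball2 /= => vic.
  rewrite /w dotvZl dotvZr mulrA -invfM ler_pdivrMl ?mulr1; last exact: mulr_gt0.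
  by rewrite /s in s0 *; nra.
have int_w : sphere_int mu (vertex_support w) = s^-1 * sphere_int mu (vertex_support v).
  have -> : vertex_support w = fun u => s^-1 * (vertex_support v u - dotv u c).
    by apply: funext => u; rewrite vertex_support_affine // invr_ge0 ltW.
  have vS := sphere_integrand_vertex_support v.
  have cS := sphere_integrand_continuous (continuous_dotvl (y := c)).
  rewrite (sphere_intZ mu_uniform); last exact: sphere_integrandB vS cS.
  by rewrite (sphere_intB mu_uniform vS cS) (sphere_int_dotv mu_uniform) subr0.
have := v_max w_indep w_ball; rewrite int_w.
have := sphere_int_vertex_support_gt0 mu_uniform d_gt0 v_indep v_ball.
have : 1 < s^-1 by rewrite invf_gt1 // /s; lra.
nra.
Qed.

Lemma maximal_hemispheres_cover u : unit_sphere R d u -> exists i, 0 <= dotv u (v i).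
Proof.
move=> u1; apply: contrapT => /forallNP u_neg.
set t := - vertex_support v u.
have t0 : 0 < t.
  have [i vi] := vertex_support_attained v u.
  by rewrite /t vi oppr_gt0 ltNge; apply/negP/u_neg.
have t1 : t <= 1.
  have [i vi] := vertex_support_attained v u; have := dotv_AMGM (-1) u (v i).
  by rewrite /t vi u1; have := v_ball i; lra.
have ti i : dotv u (v i) <= - t by rewrite opprK vertex_support_ge.
set r := Num.sqrt (1 - t ^+ 2).
have r2 : r ^+ 2 = 1 - t ^+ 2 by rewrite sqr_sqrtr // subr_ge0 expr_le1 // ltW.
have vball : conv_hull v `<=` closed_ball2 ((- t) *: u) r.
  apply: conv_hull_sub_closed_ball2 => i; have := ti i.
  have vi1 := maximal_vertex_on_sphere i.
  rewrite r2 !dotvBl !dotvBr !dotvZl !dotvZr vi1 u1 (dotvC (v i) u); nra.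
have := maximal_circumradius (sqrtr_ge0 _) vball; have := sqrtr_ge0 (1 - t ^+ 2).
by rewrite -/r; nra.
Qed.

End MaximalSimplex.

Theorem claim1p2 (R : realType) (d : nat)
  (mu : {measure set (borelR R d) -> \bar R})
  (v : 'I_d.+1 -> 'rV[R]_d) :
  (2 <= d)%N ->
  uniform_sphere_measure mu ->
  affinely_independent v ->
  conv_hull v `<=` unit_ball R d ->
  (forall w : 'I_d.+1 -> 'rV[R]_d,
      affinely_independent w -> conv_hull w `<=` unit_ball R d ->
      (mean_width mu (conv_hull w) <= mean_width mu (conv_hull v))%E) ->
  [/\ (forall (c : 'rV[R]_d) (r : R), 0 <= r ->
          conv_hull v `<=` closed_ball2 c r -> 1 <= r),
      (forall i, unit_sphere R d (v i))
    & (forall u, unit_sphere R d u -> exists i, 0 <= dotv u (v i))].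
Proof.
move=> d2 mu_uniform v_indep v_hull v_max.
have d_gt0 : (0 < d)%N by apply: leq_trans d2.
have v_ball i : dotv (v i) (v i) <= 1 := v_hull _ (conv_hull_vertex v i).
have v_max' (w : 'I_d.+1 -> 'rV[R]_d) :
    affinely_independent w -> (forall i, dotv (w i) (w i) <= 1) ->
    sphere_int mu (vertex_support w) <= sphere_int mu (vertex_support v).
  move=> w_indep w_ball; have := v_max w w_indep (conv_hull_sub_unit_ball w_ball).
  by rewrite !mean_width_conv_hull // lee_fin ler_pM2l.
split.
- exact: maximal_circumradius mu_uniform d_gt0 v_indep v_ball v_max'.
- exact: maximal_vertex_on_sphere mu_uniform d_gt0 v_indep v_ball v_max'.
- exact: maximal_hemispheres_cover mu_uniform d_gt0 v_indep v_ball v_max'.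
Qed.
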